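(* Let $f:\mathbb{R}^n\to\mathbb{R}$ be differentiable with $L$-Lipschitz gradient $\nabla f$. Let $\mathcal{E}^t$ denote the event $\|\nabla f(x^t)\|_\infty\le\eta$. Then the iterate $x^{t+1}$ of Markov gradient descent (MGD) satisfies $$\mathbb{E}\left[f(x^{t+1})\,\middle|\,x^t,\mathcal{E}^t\right]\le f(x^t)+\frac{L\alpha^2}{2\eta}\|\nabla f(x^t)\|_1-\frac{\alpha}{\eta}\|\nabla f(x^t)\|_2^2 .$$
   Context: Markov gradient descent (MGD) with lattice resolution $\alpha>0$ and normalizer $\eta>0$: start at $x^0\in\alpha\mathbb{Z}^n$; at step $t$, for each coordinate $i$, conditionally on $x^t$, $\Delta^t_i\in\{0,1\}$ is Bernoulli with $\mathbb{P}[\Delta^t_i=1\mid x^t]=\min(|\partial_i f(x^t)|/\eta,1)$, and $x^{t+1}_i=x^t_i-\alpha\,\mathrm{sgn}(\partial_i f(x^t))\Delta^t_i$. (This is stochastic Markov gradient descent with the deterministic gradient estimator $G=\nabla f$.) *)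

From HB Require Import structures.
From mathcomp Require Import all_boot all_order all_algebra.
From mathcomp Require Import all_classical all_reals all_analysis.
Set Implicit Arguments. Unset Strict Implicit. Unset Printing Implicit Defensive.
Import Order.TTheory GRing.Theory Num.Theory.
Import numFieldNormedType.Exports.
Local Open Scope ring_scope.

(* Points of R^n are row vectors 'rV[R]_n; e_i = delta_mx 0 i. *)

Definition partial {R : realType} {n : nat} (f : 'rV[R]_n -> R) (i : 'I_n)
  (x : 'rV[R]_n) : R := 'D_(delta_mx 0 i) f x.

Definition grad {R : realType} {n : nat} (f : 'rV[R]_n -> R) (x : 'rV[R]_n)
  : 'rV[R]_n := \row_i partial f i x.

Definition norm1 {R : realType} {n : nat} (v : 'rV[R]_n) : R :=
  \sum_(i < n) `|v 0 i|.
Definition norm2 {R : realType} {n : nat} (v : 'rV[R]_n) : R :=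
  Num.sqrt (\sum_(i < n) v 0 i ^+ 2).
Definition norminf {R : realType} {n : nat} (v : 'rV[R]_n) : R :=
  \big[Num.max/0]_(i < n) `|v 0 i|.

Definition on_lattice {R : realType} {n : nat} (alpha : R) (x : 'rV[R]_n) : Prop :=
  forall i : 'I_n, exists z : int, x 0 i = z%:~R * alpha.

Definition mgd_prob {R : realType} {n : nat} (f : 'rV[R]_n -> R) (eta : R)
  (x : 'rV[R]_n) (i : 'I_n) : R :=
  Num.min (`|partial f i x| / eta) 1.

Definition mgd_step {R : realType} {n : nat} (f : 'rV[R]_n -> R) (alpha : R)
  (x : 'rV[R]_n) (Delta : {ffun 'I_n -> bool}) : 'rV[R]_n :=
  \row_i (x 0 i - alpha * Num.sg (partial f i x) * (Delta i)%:R).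

(* w is a conditional law (given x^t = x) of the coin vector Delta^t that is
   admissible for MGD: a probability distribution on {0,1}^n whose i-th marginal
   is Bernoulli(min(|d_i f(x)|/eta, 1)). *)
Definition mgd_coin_law {R : realType} {n : nat} (f : 'rV[R]_n -> R) (eta : R)
  (x : 'rV[R]_n) (w : {ffun 'I_n -> bool} -> R) : Prop :=
  (forall d : {ffun 'I_n -> bool}, 0 <= w d) /\ (\sum_(d : {ffun 'I_n -> bool}) w d = 1) /\
  (forall i : 'I_n, \sum_(d : {ffun 'I_n -> bool} | d i) w d = mgd_prob f eta x i).

(* Conditional expectation of f(x^{t+1}) given x^t = x, under law w of Delta^t *)
Definition mgd_cond_exp {R : realType} {n : nat} (f : 'rV[R]_n -> R) (alpha : R)
  (x : 'rV[R]_n) (w : {ffun 'I_n -> bool} -> R) : R :=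
  \sum_(d : {ffun 'I_n -> bool}) w d * f (mgd_step f alpha x d).

From HB Require Import structures.
From mathcomp Require Import all_boot all_order all_algebra.
From mathcomp Require Import all_classical all_reals all_analysis.
From mathcomp Require Import lra ring.
Set Implicit Arguments. Unset Strict Implicit. Unset Printing Implicit Defensive.
Import Order.TTheory GRing.Theory Num.Theory.
Import numFieldNormedType.Exports.
Local Open Scope ring_scope.

(* An L-Lipschitz gradient gives the quadratic upper bound
   f(x + h) <= f(x) + <grad f(x), h> + L/2 |h|^2.  The MGD step is
   h_i = -alpha sg(d_i f(x)) Delta_i with Delta_i in {0, 1}, so Delta_i^2 = Delta_i
   and the bound is affine in the coins: f(x^{t+1}) <= f(x) + sum_i a_i Delta_i.
   Its expectation only involves the marginals E[Delta_i], which on the event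
   |grad f(x)|_oo <= eta are exactly |d_i f(x)| / eta. *)

Section EuclideanRow.
Variables (R : realType) (n : nat).
Implicit Types (a b : 'rV[R]_n).

Definition dotr a b : R := \sum_(i < n) a 0 i * b 0 i.

Lemma dotrBl a b c : dotr (a - b) c = dotr a c - dotr b c.
Proof. by rewrite /dotr -sumrB; apply: eq_bigr => i _; rewrite !mxE mulrBl. Qed.

Lemma norm2_ge0 a : 0 <= norm2 a.
Proof. exact: sqrtr_ge0. Qed.

Lemma sqr_norm2 a : norm2 a ^+ 2 = \sum_(i < n) a 0 i ^+ 2.
Proof. by rewrite sqr_sqrtr // sumr_ge0 // => i _; apply: sqr_ge0. Qed.

Lemma norm2Z (t : R) a : norm2 (t *: a) = `|t| * norm2 a.
Proof.
rewrite /norm2 -sqrtr_sqr -sqrtrM ?sqr_ge0 // mulr_sumr.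
by congr Num.sqrt; apply: eq_bigr => i _; rewrite mxE exprMn.
Qed.

Lemma norm2_eq0 a : norm2 a = 0 -> a = 0.
Proof.
move=> a0; apply/rowP => i; rewrite mxE; apply/eqP; rewrite -sqrf_eq0.
have /psumr_eq0P sq0 : \sum_(j < n) a 0 j ^+ 2 = 0 by rewrite -sqr_norm2 a0 expr0n.
by rewrite sq0 // => j _; apply: sqr_ge0.
Qed.

Lemma dotr_norm2_le a b : dotr a b <= norm2 a * norm2 b.
Proof.
have [/norm2_eq0 -> | a0] := eqVneq (norm2 a) 0.
  by rewrite /dotr big1 ?mulr_ge0 ?norm2_ge0 // => i _; rewrite mxE mul0r.
have [/norm2_eq0 -> | b0] := eqVneq (norm2 b) 0.
  by rewrite /dotr big1 ?mulr_ge0 ?norm2_ge0 // => i _; rewrite mxE mulr0.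
have Ap : 0 < norm2 a by rewrite lt_def a0 norm2_ge0.
have Bp : 0 < norm2 b by rewrite lt_def b0 norm2_ge0.
set A := norm2 a in Ap *; set B := norm2 b in Bp *.
(* sum_i (B a_i - A b_i)^2 >= 0 expands to 2 A B <a, b> <= 2 A^2 B^2 *)
have amgm : \sum_(i < n) (2 * A * B) * (a 0 i * b 0 i) <=
            \sum_(i < n) (B ^+ 2 * a 0 i ^+ 2 + A ^+ 2 * b 0 i ^+ 2).
  by apply: ler_sum => i _; have := sqr_ge0 (B * a 0 i - A * b 0 i); nra.
rewrite -mulr_sumr big_split /= -!mulr_sumr -!sqr_norm2 -/A -/B in amgm.
have ABp : 0 < A * B by apply: mulr_gt0.
rewrite /dotr; nra.
Qed.

End EuclideanRow.

Lemma is_derive_quadratic (R : realType) (c k t : R) :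
  is_derive t 1 (fun s : R => s * c + s ^+ 2 * k) (c + 2 * t * k).
Proof. by apply: is_derive_eq; rewrite !scaler0 !add0r /GRing.scale /=; ring. Qed.

Section LipschitzGradient.
Variables (R : realType) (n : nat) (f : 'rV[R]_n -> R).
Hypothesis f_diff : forall x, differentiable f x.

Lemma diff_dotr_grad z h : 'd f z h = dotr (grad f z) h.
Proof.
rewrite {1}(row_sum_delta h) linear_sum /dotr; apply: eq_bigr => i _.
by rewrite linearZ /= mxE /partial deriveE // mulrC.
Qed.

Lemma is_derive_along_line x h (t : R) :
  is_derive t 1 (fun s : R => f (x + s *: h)) ('D_h f (x + t *: h)).
Proof.
have quotE : (fun s : R => s^-1 *: (((fun s => f (x + s *: h)) \o shift t) (s *: 1)
                                   - f (x + t *: h)))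
           = (fun s : R => s^-1 *: ((f \o shift (x + t *: h)) (s *: h) - f (x + t *: h))).
  apply/funext => s /=; congr (_ *: (f _ - _)).
  by rewrite scalerDl /GRing.scale /= mulr1 addrCA.
apply: DeriveDef; first by rewrite /derivable quotE; apply: diff_derivable.
by rewrite /derive quotE.
Qed.

Variable L : R.
Hypothesis grad_lip : forall x y, norm2 (grad f x - grad f y) <= L * norm2 (x - y).

Lemma dotr_grad_increment_le x h t : 0 <= t ->
  dotr (grad f (x + t *: h) - grad f x) h <= L * t * norm2 h ^+ 2.
Proof.
move=> t0; apply: le_trans (dotr_norm2_le _ _) _.
have := grad_lip (x + t *: h) x; rewrite [x + _ - x]addrC addKr norm2Z ger0_norm // => lip.
by rewrite expr2 mulrA -(mulrA L); apply: ler_wpM2r => //; apply: norm2_ge0.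
Qed.

Lemma descent_lemma x h :
  f (x + h) <= f x + dotr (grad f x) h + L / 2 * norm2 h ^+ 2.
Proof.
set c := dotr (grad f x) h; set k := L / 2 * norm2 h ^+ 2.
pose phi s := f (x + s *: h) - (s * c + s ^+ 2 * k).
have dphi (t : R) : is_derive t 1 phi ('D_h f (x + t *: h) - (c + 2 * t * k)).
  by apply: is_deriveB; [apply: is_derive_along_line | apply: is_derive_quadratic].
have phi_decr : phi 1 <= phi 0.
  apply: (@ler0_derive1_le_cc _ phi 0 1); rewrite ?in_itv /= ?lexx ?ler01 //.
  - move=> t; rewrite in_itv /= => /andP[t0 _].
    rewrite derive1E derive_val deriveE // diff_dotr_grad.
    have := dotr_grad_increment_le x h (ltW t0); rewrite dotrBl -/c /k; nra.
  - by apply: derivable_within_continuous => t _; case: (dphi t).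
move: phi_decr; rewrite /phi scale1r scale0r addr0 expr1n expr0n /=; lra.
Qed.

End LipschitzGradient.

Section CoinLaw.
Variables (R : realType) (I : finType) (w : {ffun I -> bool} -> R) (p : I -> R).
Hypotheses (w_sum1 : \sum_d w d = 1)
           (w_marginal : forall i, \sum_(d : {ffun I -> bool} | d i) w d = p i).

Lemma expectation_coin i : \sum_d w d * (d i)%:R = p i.
Proof.
rewrite -w_marginal [RHS]big_mkcond /=; apply: eq_bigr => d _.
by case: (d i); rewrite ?mulr1 ?mulr0.
Qed.

Lemma expectation_affine_coins (c : R) (a : I -> R) :
  \sum_d w d * (c + \sum_i a i * (d i)%:R) = c + \sum_i a i * p i.
Proof.
under eq_bigr do rewrite mulrDr mulr_sumr.
rewrite big_split /= -mulr_suml w_sum1 mul1r exchange_big /=; congr (_ + _).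
by apply: eq_bigr => i _; rewrite -(expectation_coin i) mulr_sumr;
   apply: eq_bigr => d _; rewrite mulrCA.
Qed.

End CoinLaw.

Section MGD.
Variables (R : realType) (n : nat) (f : 'rV[R]_n -> R) (alpha eta : R).

Lemma mgd_probE x i : 0 < eta -> norminf (grad f x) <= eta ->
  mgd_prob f eta x i = `|partial f i x| / eta.
Proof.
move=> eta_gt0 small; rewrite /mgd_prob; apply/min_l.
rewrite ler_pdivrMr // mul1r; apply: le_trans small.
have -> : partial f i x = grad f x 0 i by rewrite mxE.
exact: (le_bigmax _ (fun j => `|grad f x 0 j|) i).
Qed.

Definition mgd_coef (x : 'rV[R]_n) (L : R) (i : 'I_n) : R :=
  - alpha * `|partial f i x| + L / 2 * (alpha ^+ 2 * Num.sg (partial f i x) ^+ 2).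

Lemma mgd_step_le (L : R) x d : (forall z, differentiable f z) ->
  (forall y z, norm2 (grad f y - grad f z) <= L * norm2 (y - z)) ->
  f (mgd_step f alpha x d) <= f x + \sum_i mgd_coef x L i * (d i)%:R.
Proof.
move=> f_diff grad_lip.
pose h : 'rV[R]_n := \row_i (- alpha * Num.sg (partial f i x) * (d i)%:R).
have -> : mgd_step f alpha x d = x + h by apply/rowP => i; rewrite !mxE; ring.
apply: le_trans (descent_lemma f_diff grad_lip x h) _.
rewrite -addrA lerD2l sqr_norm2 mulr_sumr /dotr -big_split /=.
apply: ler_sum => i _; rewrite /mgd_coef !mxE normrEsg.
by case: (d i) => /=; lra.
Qed.

Lemma sum_mgd_coef x L : 0 < eta ->
  \sum_i mgd_coef x L i * (`|partial f i x| / eta)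
  = L * alpha ^+ 2 / (2 * eta) * norm1 (grad f x) - alpha / eta * norm2 (grad f x) ^+ 2.
Proof.
move=> eta_gt0; rewrite /norm1 sqr_norm2 !mulr_sumr -sumrB.
apply: eq_bigr => i _; rewrite /mgd_coef mxE sqr_sg -(real_normK (num_real (partial f i x))).
have eta0 : eta != 0 by rewrite gt_eqF.
have [->|pi0] := eqVneq (partial f i x) 0; rewrite ?normr0 /=; first by rewrite mul0r; ring.
by field.
Qed.

End MGD.

Theorem corollary6p1 (R : realType) (n : nat) (f : 'rV[R]_n -> R)
  (L alpha eta : R) (halpha : 0 < alpha) (heta : 0 < eta)
  (hdiff : forall x : 'rV[R]_n, differentiable f x)
  (hlip : forall x y : 'rV[R]_n, norm2 (grad f x - grad f y) <= L * norm2 (x - y))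
  (x : 'rV[R]_n) (hx : on_lattice alpha x)
  (hE : norminf (grad f x) <= eta)
  (w : {ffun 'I_n -> bool} -> R) (hw : mgd_coin_law f eta x w) :
  mgd_cond_exp f alpha x w <=
    f x + L * alpha ^+ 2 / (2 * eta) * norm1 (grad f x)
        - alpha / eta * norm2 (grad f x) ^+ 2.
Proof.
case: hw => [w_ge0 [w_sum1 w_marginal]].
have marginal i : \sum_(d : {ffun 'I_n -> bool} | d i) w d = `|partial f i x| / eta.
  by rewrite w_marginal mgd_probE.
apply: le_trans (_ : \sum_d w d * (f x + \sum_i mgd_coef f alpha x L i * (d i)%:R) <= _).
  by apply: ler_sum => d _; apply: ler_wpM2l; [apply: w_ge0 | apply: mgd_step_le].
rewrite (expectation_affine_coins w_sum1 marginal) sum_mgd_coef // -[leRHS]addrA.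
exact: lexx.
Qed.
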